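(* Let $\Gamma_1,\Gamma_2,\Gamma_3$ be constants with $\Gamma_1+\Gamma_2+\Gamma_3=0$. Let $\vec\alpha_0,\vec\alpha_1,\vec\alpha_2,\vec\alpha_3\in\mathbb{R}^3$ be arbitrary vectors, and put $$\vec e_i=\tfrac12\left(\vec\alpha_0+\vec\alpha_i-\vec\alpha_j-\vec\alpha_k\right)\quad(\{i,j,k\}=\{1,2,3\}),\qquad \vec\delta=\tfrac14\sum_{\ell=0}^{3}\vec\alpha_\ell .$$ Let $\lambda_0,\dots,\lambda_3$ be pairwise distinct constants with $\sum_{i=1}^3\Gamma_i\lambda_i\neq0$ and $$\lambda_0=\sum_{i=1}^3\lambda_i-\frac{\sum_{i=1}^3\Gamma_i\lambda_i^2}{\sum_{i=1}^3\Gamma_i\lambda_i},$$ and let $a_{l,m}$ (skew-symmetric: $a_{m,l}=-a_{l,m}$) and $b_{l,m}$ (symmetric) for $l\ne m$ in $\{0,1,2,3\}$ be constants with $a_{l,m}b_{l,m}=\lambda_l-\lambda_m$. Suppose $\sigma,\rho,\tau:\mathbb{R}^3\to\mathbb{C}$ satisfy, for all $\vec x\in\mathbb{R}^3$ and all $l\neq m$ in $\{0,1,2,3\}$, $$a_{l,m}\,\tau(\vec x)\,\sigma(\vec x+\vec\alpha_l+\vec\alpha_m)=\sigma(\vec x+\vec\alpha_l)\tau(\vec x+\vec\alpha_m)-\tau(\vec x+\vec\alpha_l)\sigma(\vec x+\vec\alpha_m),$$ $$a_{l,m}\,\rho(\vec x)\,\tau(\vec x+\vec\alpha_l+\vec\alpha_m)=\tau(\vec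 x+\vec\alpha_l)\rho(\vec x+\vec\alpha_m)-\rho(\vec x+\vec\alpha_l)\tau(\vec x+\vec\alpha_m),$$ $$b_{l,m}\,\tau(\vec x+\vec\alpha_l)\tau(\vec x+\vec\alpha_m)=\tau(\vec x)\tau(\vec x+\vec\alpha_l+\vec\alpha_m)+\rho(\vec x)\sigma(\vec x+\vec\alpha_l+\vec\alpha_m).$$ For $n=(n_1,n_2,n_3)\in\mathbb{Z}^3$ let $\vec x(n)=\sum_{i}n_i\vec e_i$ and define $$u(n)=\begin{cases}\rho(\vec x(n)-\vec\delta)/\tau(\vec x(n)-\vec\delta), & n_1+n_2+n_3\ \text{even},\\ \sigma(\vec x(n)+\vec\delta)/\tau(\vec x(n)+\vec\delta), & n_1+n_2+n_3\ \text{odd}.\end{cases}$$ Then $u$ satisfies $$\sum_{i=1}^3\Gamma_i\left[\frac{u(n+e_i)}{1+u(n)u(n+e_i)}+\frac{u(n-e_i)}{1+u(n)u(n-e_i)}\right]=0$$ for every $n\in\mathbb{Z}^3$ at which all quantities involved are defined (all denominators nonzero), where $e_i$ denotes the $i$-th standard unit vector of $\mathbb{Z}^3$.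
   Context: This equation is the Euler–Lagrange (''variational'') equation $\partial\mathcal S/\partial u(n)=0$ of the lattice action $\mathcal S=\sum_{n\in\mathbb{Z}^3}\sum_{i=1}^3\Gamma_i\ln[1+u(n)u(n+e_i)]$. The parity classes $n_1+n_2+n_3$ even/odd are the two sublattices of the bipartite cubic lattice. *)

From HB Require Import structures.
From mathcomp Require Import all_boot all_order all_algebra.
From mathcomp Require Import reals.
From mathcomp Require Import complex.

Set Implicit Arguments.
Unset Strict Implicit.
Unset Printing Implicit Defensive.
Import Order.TTheory GRing.Theory Num.Theory.
Local Open Scope ring_scope.

(* Indices 0..3 of alpha, lambda, a, b are 'I_4; the lattice directions 1..3 are
   'I_3, where direction i : 'I_3 corresponds to alpha index (lift ord0 i) = i+1. *)

Definition evec (R : realType) (alpha : 'I_4 -> 'rV[R]_3) (i : 'I_3) : 'rV[R]_3 :=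
  2^-1 *: (alpha ord0 + alpha (lift ord0 i)
           - \sum_(j < 3 | j != i) alpha (lift ord0 j)).

Definition delta (R : realType) (alpha : 'I_4 -> 'rV[R]_3) : 'rV[R]_3 :=
  4^-1 *: \sum_(l < 4) alpha l.

Definition xvec (R : realType) (alpha : 'I_4 -> 'rV[R]_3) (n : 'I_3 -> int) : 'rV[R]_3 :=
  \sum_(i < 3) (n i)%:~R *: evec alpha i.

Definition even_site (n : 'I_3 -> int) : bool := (2 %| \sum_(i < 3) n i)%Z.

Definition upoint (R : realType) (alpha : 'I_4 -> 'rV[R]_3) (n : 'I_3 -> int) : 'rV[R]_3 :=
  if even_site n then xvec alpha n - delta alpha else xvec alpha n + delta alpha.

Definition u (R : realType) (alpha : 'I_4 -> 'rV[R]_3)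
    (sigma rho tau : 'rV[R]_3 -> R[i]) (n : 'I_3 -> int) : R[i] :=
  if even_site n then rho (upoint alpha n) / tau (upoint alpha n)
  else sigma (upoint alpha n) / tau (upoint alpha n).

Definition shiftp (n : 'I_3 -> int) (i : 'I_3) : 'I_3 -> int :=
  fun j => n j + (j == i)%:Z.
Definition shiftm (n : 'I_3 -> int) (i : 'I_3) : 'I_3 -> int :=
  fun j => n j - (j == i)%:Z.

From HB Require Import structures.
From mathcomp Require Import all_boot all_order all_algebra.
From mathcomp Require Import reals complex.
From mathcomp Require Import zify ring.
Import Order.TTheory GRing.Theory Num.Theory.

Set Implicit Arguments.
Unset Strict Implicit.
Unset Printing Implicit Defensive.
Local Open Scope ring_scope.

(* At an even site put y = x(n) - delta.  Since e_i + 2 delta = alpha_0 + alpha_i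
   and 2 delta - e_i = alpha_j + alpha_k, the neighbours n + e_i and n - e_i are
   evaluated at y + alpha_0 + alpha_i and y + alpha_j + alpha_k.  For a neighbour
   at y + alpha_l + alpha_m the tau-equation gives
   1 + u(n) u(n') = b_lm tau(y + alpha_l) tau(y + alpha_m) / (tau(y) tau(y + alpha_l + alpha_m)),
   and the sigma-equation then turns u(n') / (1 + u(n) u(n')) into the divided
   difference (f_l - f_m) / (lam_l - lam_m) of f_l = sigma(y + alpha_l) / tau(y + alpha_l).
   Odd sites are symmetric, with rho and f_l = rho(w - alpha_l) / tau(w - alpha_l),
   w = x(n) + delta.  Finally, the conditions on Gamma and lam_0 say exactly that
   Gamma_i is proportional to (lam_0 - lam_i)(lam_j - lam_k), and for such weights
   the sum of divided differences vanishes identically in f. *)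

Lemma ordS3 : [/\ ordS (ord0 : 'I_3) = lift ord0 ord0,
  ordS (lift ord0 ord0 : 'I_3) = lift ord0 (lift ord0 ord0) &
  ordS (lift ord0 (lift ord0 ord0) : 'I_3) = ord0].
Proof. by split; apply: val_inj. Qed.

Lemma ord3P (P : 'I_3 -> Prop) :
  P ord0 -> P (lift ord0 ord0) -> P (lift ord0 (lift ord0 ord0)) -> forall i, P i.
Proof.
move=> P0 P1 P2 [[|[|[|//]]] Hi].
- by have -> : Ordinal Hi = ord0 by exact: val_inj.
- by have -> : Ordinal Hi = lift ord0 ord0 by exact: val_inj.
- by have -> : Ordinal Hi = lift ord0 (lift ord0 ord0) by exact: val_inj.
Qed.

Lemma sum_ord3_neq (V : zmodType) (F : 'I_3 -> V) (i : 'I_3) :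
  \sum_(j < 3 | j != i) F j = F (ordS i) + F (ordS (ordS i)).
Proof.
have [S0 S1 S2] := ordS3.
rewrite big_mkcond !big_ord_recl big_ord0.
by elim/ord3P: i; rewrite ?S0 ?S1 ?S2 ?S0 /= ?add0r ?addr0 // addrC.
Qed.

Lemma lift_ordS_neq (i : 'I_3) :
  lift ord0 (ordS i) != lift ord0 (ordS (ordS i)) :> 'I_4.
Proof. by case: i => -[|[|[|]]]. Qed.

Lemma inj_subr_neq0 (I : eqType) (V : zmodType) (f : I -> V) (l m : I) :
  injective f -> l != m -> f l - f m != 0.
Proof. by move=> f_inj; rewrite subr_eq0 (inj_eq f_inj). Qed.

Definition divdiff (I : Type) (C : fieldType) (lam f : I -> C) (l m : I) : C :=
  (f l - f m) / (lam l - lam m).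

Lemma weights_proportional (C : fieldType) (g1 g2 g3 l0 l1 l2 l3 : C) :
  g1 + g2 + g3 = 0 -> g1 * l1 + g2 * l2 + g3 * l3 != 0 ->
  l0 = l1 + l2 + l3 - (g1 * l1 ^+ 2 + g2 * l2 ^+ 2 + g3 * l3 ^+ 2)
                      / (g1 * l1 + g2 * l2 + g3 * l3) ->
  g2 * ((l0 - l1) * (l2 - l3)) = g1 * ((l0 - l2) * (l3 - l1)).
Proof.
move=> sum0 D0 l0E.
have g3E : g3 = - g1 - g2 by apply/eqP; rewrite -subr_eq0 -sum0; apply/eqP; ring.
have l0D : (l0 - (l1 + l2 + l3)) * (g1 * l1 + g2 * l2 + g3 * l3)
           + (g1 * l1 ^+ 2 + g2 * l2 ^+ 2 + g3 * l3 ^+ 2) = 0.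
  by rewrite l0E; field.
by apply/eqP; rewrite -subr_eq0 -l0D g3E; apply/eqP; ring.
Qed.

Lemma weighted_divdiff_sum_eq0 (C : fieldType) (g1 g2 g3 l0 l1 l2 l3 f0 f1 f2 f3 : C) :
  g1 + g2 + g3 = 0 -> g2 * ((l0 - l1) * (l2 - l3)) = g1 * ((l0 - l2) * (l3 - l1)) ->
  l0 - l1 != 0 -> l0 - l2 != 0 -> l0 - l3 != 0 ->
  l1 - l2 != 0 -> l2 - l3 != 0 -> l3 - l1 != 0 ->
  g1 * ((f0 - f1) / (l0 - l1) + (f2 - f3) / (l2 - l3))
  + g2 * ((f0 - f2) / (l0 - l2) + (f3 - f1) / (l3 - l1))
  + g3 * ((f0 - f3) / (l0 - l3) + (f1 - f2) / (l1 - l2)) = 0.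
Proof.
move=> sum0 cross d01 d02 d03 d12 d23 d31.
have g3E : g3 = - g1 - g2 by apply/eqP; rewrite -subr_eq0 -sum0; apply/eqP; ring.
have g2E : g2 = g1 * ((l0 - l2) * (l3 - l1)) / ((l0 - l1) * (l2 - l3)).
  by rewrite -cross; field; rewrite d01 d23.
by rewrite g3E g2E; field; rewrite d01 d02 d03 d12 d23 d31.
Qed.

Lemma sum_divdiff_eq0 (C : fieldType) (Gamma : 'I_3 -> C) (lam f : 'I_4 -> C) :
  \sum_(i < 3) Gamma i = 0 ->
  injective lam ->
  \sum_(i < 3) Gamma i * lam (lift ord0 i) != 0 ->
  lam ord0 = \sum_(i < 3) lam (lift ord0 i)
             - (\sum_(i < 3) Gamma i * lam (lift ord0 i) ^+ 2)
               / (\sum_(i < 3) Gamma i * lam (lift ord0 i)) ->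
  \sum_(i < 3) Gamma i * (divdiff lam f ord0 (lift ord0 i)
     + divdiff lam f (lift ord0 (ordS i)) (lift ord0 (ordS (ordS i)))) = 0.
Proof.
have [S0 S1 S2] := ordS3.
rewrite !big_ord_recl !big_ord0 !addr0 S0 S1 S2 S0 /divdiff !addrA.
move=> sum0 lam_inj D0 /(weights_proportional sum0 D0) cross.
by apply: (weighted_divdiff_sum_eq0 _ _ _ _ sum0 cross); apply: inj_subr_neq0.
Qed.

Lemma bilinear_ratio (C : fieldType) (a b d r t tl tm tlm sl sm slm : C) :
  a * b = d -> d != 0 ->
  a * t * slm = sl * tm - tl * sm ->
  b * tl * tm = t * tlm + r * slm ->
  t != 0 -> tlm != 0 -> 1 + r / t * (slm / tlm) != 0 ->
  slm / tlm / (1 + r / t * (slm / tlm)) = (sl / tl - sm / tm) / d.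
Proof.
move=> abE d0 aE bE t0 tlm0 den0.
have denE : 1 + r / t * (slm / tlm) = b * tl * tm / (t * tlm).
  by rewrite bE; field; rewrite t0 tlm0.
have : b * tl * tm != 0 by apply: contraNneq den0 => btt0; rewrite denE btt0 mul0r.
rewrite !mulf_eq0 !negb_or => /andP [/andP [b0 tl0] tm0].
have a0 : a != 0 by apply: contraNneq d0 => a0; rewrite -abE a0 mul0r.
have -> : sl / tl - sm / tm = a * t * slm / (tl * tm) by rewrite aE; field; rewrite tl0 tm0.
by rewrite denE -abE; field; rewrite t0 tlm0 a0 b0 tl0 tm0.
Qed.

Section HirotaRatios.
Variables (V : zmodType) (C : fieldType).
Variables (alpha : 'I_4 -> V) (lam : 'I_4 -> C) (a b : 'I_4 -> 'I_4 -> C).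
Variables (sigma rho tau : V -> C).
Hypothesis lam_inj : injective lam.
Hypothesis ab_lam : forall l m, l != m -> a l m * b l m = lam l - lam m.
Hypothesis sigma_eq : forall x l m, l != m ->
  a l m * tau x * sigma (x + alpha l + alpha m)
  = sigma (x + alpha l) * tau (x + alpha m) - tau (x + alpha l) * sigma (x + alpha m).
Hypothesis rho_eq : forall x l m, l != m ->
  a l m * rho x * tau (x + alpha l + alpha m)
  = tau (x + alpha l) * rho (x + alpha m) - rho (x + alpha l) * tau (x + alpha m).
Hypothesis tau_eq : forall x l m, l != m ->
  b l m * tau (x + alpha l) * tau (x + alpha m)
  = tau x * tau (x + alpha l + alpha m) + rho x * sigma (x + alpha l + alpha m).

Local Notation st x := (sigma x / tau x).
Local Notation rt x := (rho x / tau x).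

Lemma sigma_ratio_step y l m : l != m ->
  tau y != 0 -> tau (y + (alpha l + alpha m)) != 0 ->
  1 + rt y * st (y + (alpha l + alpha m)) != 0 ->
  st (y + (alpha l + alpha m)) / (1 + rt y * st (y + (alpha l + alpha m)))
  = divdiff lam (fun k => st (y + alpha k)) l m.
Proof.
move=> lm; rewrite addrA.
exact: bilinear_ratio (ab_lam lm) (inj_subr_neq0 lam_inj lm) (sigma_eq y lm) (tau_eq y lm).
Qed.

Lemma rho_ratio_step w l m : l != m ->
  tau w != 0 -> tau (w - (alpha l + alpha m)) != 0 ->
  1 + st w * rt (w - (alpha l + alpha m)) != 0 ->
  rt (w - (alpha l + alpha m)) / (1 + st w * rt (w - (alpha l + alpha m)))
  = divdiff lam (fun k => rt (w - alpha k)) l m.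
Proof.
move=> lm; set x := w - (alpha l + alpha m).
have xlm : x + alpha l + alpha m = w by rewrite -addrA subrK.
have xl : x + alpha l = w - alpha m by rewrite /x opprD addrA addrAC subrK.
have xm : x + alpha m = w - alpha l by rewrite /x opprD addrA subrK.
have := rho_eq x lm; have := tau_eq x lm; rewrite xlm xl xm => tauE rhoE.
apply: bilinear_ratio (ab_lam lm) (inj_subr_neq0 lam_inj lm) _ _.
- by rewrite mulrAC rhoE; ring.
- by rewrite mulrAC tauE; ring.
Qed.

End HirotaRatios.

Lemma even_site_shiftp n i : even_site (shiftp n i) = ~~ even_site n.
Proof.
rewrite /even_site /shiftp big_split /=; set s := \sum_(j < 3) n j.
rewrite (bigD1 i) //= eqxx big1 ?addr0 => [|j /negbTE -> //].
by apply/idP/idP; lia.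
Qed.

Lemma even_site_shiftm n i : even_site (shiftm n i) = ~~ even_site n.
Proof.
rewrite /even_site /shiftm sumrB /=; set s := \sum_(j < 3) n j.
rewrite (bigD1 i) //= eqxx big1 ?addr0 => [|j /negbTE -> //].
by apply/idP/idP; lia.
Qed.

Section Lattice.
Variables (R : realType) (alpha : 'I_4 -> 'rV[R]_3).

Lemma delta_split (i : 'I_3) :
  delta alpha = 4^-1 *: (alpha ord0 + alpha (lift ord0 i)
                         + \sum_(j < 3 | j != i) alpha (lift ord0 j)).
Proof. by rewrite /delta big_ord_recl (bigD1 i) //= addrA. Qed.

Lemma evec_add_delta2 (i : 'I_3) :
  evec alpha i + delta alpha *+ 2 = alpha ord0 + alpha (lift ord0 i).
Proof. by rewrite (delta_split i) /evec; apply/rowP => c; rewrite !mxE; field. Qed.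

Lemma delta2_sub_evec (i : 'I_3) :
  delta alpha *+ 2 - evec alpha i
  = alpha (lift ord0 (ordS i)) + alpha (lift ord0 (ordS (ordS i))).
Proof.
rewrite -(sum_ord3_neq (alpha \o lift ord0)) (delta_split i) /evec.
by apply/rowP => c; rewrite !mxE; field.
Qed.

Lemma xvec_shiftp n i : xvec alpha (shiftp n i) = xvec alpha n + evec alpha i.
Proof.
rewrite /xvec /shiftp.
under eq_bigr => j _ do rewrite intrD scalerDl.
rewrite big_split /=; congr (_ + _).
by rewrite (bigD1 i) //= eqxx scale1r big1 ?addr0 // => j /negbTE ->; rewrite scale0r.
Qed.

Lemma xvec_shiftm n i : xvec alpha (shiftm n i) = xvec alpha n - evec alpha i.
Proof.
rewrite /xvec /shiftm.
under eq_bigr => j _ do rewrite intrB scalerBl.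
rewrite sumrB /=; congr (_ - _).
by rewrite (bigD1 i) //= eqxx scale1r big1 ?addr0 // => j /negbTE ->; rewrite scale0r.
Qed.

Lemma upoint_shiftp_even n i : even_site n ->
  upoint alpha (shiftp n i) = upoint alpha n + (alpha ord0 + alpha (lift ord0 i)).
Proof.
move=> ev; rewrite /upoint even_site_shiftp ev /= xvec_shiftp -evec_add_delta2.
by rewrite -!addrA; congr (_ + _); rewrite mulr2n addrCA addKr.
Qed.

Lemma upoint_shiftm_even n i : even_site n ->
  upoint alpha (shiftm n i)
  = upoint alpha n + (alpha (lift ord0 (ordS i)) + alpha (lift ord0 (ordS (ordS i)))).
Proof.
move=> ev; rewrite /upoint even_site_shiftm ev /= xvec_shiftm -delta2_sub_evec.
by rewrite -!addrA; congr (_ + _); rewrite addKr addrC.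
Qed.

Lemma upoint_shiftp_odd n i : ~~ even_site n ->
  upoint alpha (shiftp n i)
  = upoint alpha n - (alpha (lift ord0 (ordS i)) + alpha (lift ord0 (ordS (ordS i)))).
Proof.
move=> /negbTE od; rewrite /upoint even_site_shiftp od /= xvec_shiftp -delta2_sub_evec.
by rewrite -!addrA; congr (_ + _); rewrite opprD addNKr opprB.
Qed.

Lemma upoint_shiftm_odd n i : ~~ even_site n ->
  upoint alpha (shiftm n i) = upoint alpha n - (alpha ord0 + alpha (lift ord0 i)).
Proof.
move=> /negbTE od; rewrite /upoint even_site_shiftm od /= xvec_shiftm -evec_add_delta2.
by rewrite -!addrA; congr (_ + _); rewrite mulr2n !opprD addrCA addNKr.
Qed.

End Lattice.

Theorem proposition3p1 (R : realType)
  (Gamma : 'I_3 -> R[i]) (alpha : 'I_4 -> 'rV[R]_3)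
  (lam : 'I_4 -> R[i]) (a b : 'I_4 -> 'I_4 -> R[i])
  (sigma rho tau : 'rV[R]_3 -> R[i]) :
  \sum_(i < 3) Gamma i = 0 ->
  injective lam ->
  \sum_(i < 3) Gamma i * lam (lift ord0 i) != 0 ->
  lam ord0 = \sum_(i < 3) lam (lift ord0 i)
             - (\sum_(i < 3) Gamma i * lam (lift ord0 i) ^+ 2)
               / (\sum_(i < 3) Gamma i * lam (lift ord0 i)) ->
  (forall l m : 'I_4, l != m -> a m l = - a l m) ->
  (forall l m : 'I_4, l != m -> b m l = b l m) ->
  (forall l m : 'I_4, l != m -> a l m * b l m = lam l - lam m) ->
  (forall (x : 'rV[R]_3) (l m : 'I_4), l != m ->
     a l m * tau x * sigma (x + alpha l + alpha m)
     = sigma (x + alpha l) * tau (x + alpha m) - tau (x + alpha l) * sigma (x + alpha m)) ->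
  (forall (x : 'rV[R]_3) (l m : 'I_4), l != m ->
     a l m * rho x * tau (x + alpha l + alpha m)
     = tau (x + alpha l) * rho (x + alpha m) - rho (x + alpha l) * tau (x + alpha m)) ->
  (forall (x : 'rV[R]_3) (l m : 'I_4), l != m ->
     b l m * tau (x + alpha l) * tau (x + alpha m)
     = tau x * tau (x + alpha l + alpha m) + rho x * sigma (x + alpha l + alpha m)) ->
  forall n : 'I_3 -> int,
    tau (upoint alpha n) != 0 ->
    (forall i : 'I_3, tau (upoint alpha (shiftp n i)) != 0) ->
    (forall i : 'I_3, tau (upoint alpha (shiftm n i)) != 0) ->
    (forall i : 'I_3,
       1 + u alpha sigma rho tau n * u alpha sigma rho tau (shiftp n i) != 0) ->
    (forall i : 'I_3,
       1 + u alpha sigma rho tau n * u alpha sigma rho tau (shiftm n i) != 0) ->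
    \sum_(i < 3) Gamma i *
       (u alpha sigma rho tau (shiftp n i)
          / (1 + u alpha sigma rho tau n * u alpha sigma rho tau (shiftp n i))
        + u alpha sigma rho tau (shiftm n i)
          / (1 + u alpha sigma rho tau n * u alpha sigma rho tau (shiftm n i))) = 0.
Proof.
move=> sumG0 lam_inj sumGlam0 lam0E _ _ ab_lam sigma_eq rho_eq tau_eq n
  tau_n tau_np tau_nm u_np u_nm.
have sigma_step := sigma_ratio_step lam_inj ab_lam sigma_eq tau_eq.
have rho_step := rho_ratio_step lam_inj ab_lam rho_eq tau_eq.
rewrite /u in u_np u_nm *.
have [ev | od] := boolP (even_site n).
- rewrite -[RHS](sum_divdiff_eq0 (fun k => sigma (upoint alpha n + alpha k)
                                          / tau (upoint alpha n + alpha k))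
                                 sumG0 lam_inj sumGlam0 lam0E).
  apply: eq_bigr => i _; move: tau_n (tau_np i) (tau_nm i) (u_np i) (u_nm i).
  rewrite even_site_shiftp even_site_shiftm ev.
  rewrite upoint_shiftp_even // upoint_shiftm_even //= => *.
  by congr (_ * (_ + _)); apply: sigma_step; rewrite ?lift_ordS_neq.
- rewrite -[RHS](sum_divdiff_eq0 (fun k => rho (upoint alpha n - alpha k)
                                          / tau (upoint alpha n - alpha k))
                                 sumG0 lam_inj sumGlam0 lam0E).
  apply: eq_bigr => i _; move: tau_n (tau_np i) (tau_nm i) (u_np i) (u_nm i).
  rewrite even_site_shiftp even_site_shiftm (negbTE od).
  rewrite upoint_shiftp_odd // upoint_shiftm_odd //= => *.
  by rewrite addrC; congr (_ * (_ + _)); apply: rho_step; rewrite ?lift_ordS_neq.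
Qed.
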